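(* Suppose $c,\rho>0$ satisfy the parameter condition (C), the graph $G$ is connected, and $\mathcal A\neq\emptyset$. Then the sequences $\{\mathbf z^t\}_{t\ge1}$, $\{\mathbf w^t\}_{t\ge1}$, $\{\boldsymbol\lambda^t\}_{t\ge1}$ and $\{\tilde{\mathbf z}^t\}_{t\ge1}$ generated by Algorithm SP-ADMM-JCNL are bounded.
   Context: $G=(\mathcal N,\mathcal E)$ is an undirected graph on $\mathcal N=\{1,\dots,N\}$, $\mathcal N_i=\{j:(i,j)\in\mathcal E\}$, $N_i=|\mathcal N_i|\ge1$ (neighbors listed in a fixed order). $\mathcal A\subseteq\mathcal N$ is the set of anchors with known positions $\mathbf a_k\in\mathbb R^n$. Measurements $d_{i,j}=d_{j,i}\ge0$ ($j\in\mathcal N_i$) and $r_i\ge0$. $\mathcal B^{k}$ is the product of $k$ closed Euclidean unit balls of $\mathbb R^n$; $\delta_C$ is the indicator function of $C$. Variables: $\mathbf z_i=(\mathbf x_i,\mathbf p_i^-,\mathbf p_i^+,\mathbf y_i,\mathbf q_i^-,\mathbf q_i^+)\in\mathbb R^{(4N_i+2)n}$ with $\mathbf p_i^\pm=(\mathbf p^\pm_{i,j})_{j\in\mathcal N_i}$, $\mathbf q_i^\pm=(\mathbf q^\pm_{i,j})_{j\in\mathcal N_i}$ (blocks in $\mathbb R^n$), $\mathbf z=(\mathbf z_i)_i$; $\mathbf w_i=((\mathbf v_{i,j})_{j\in\mathcal N_i},\mathbf u_i)\in\mathbb R^{(N_i+1)n}$, $\mathbf w=(\mathbf w_i)_i$;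 $\boldsymbol\lambda_i\in\mathbb R^{3N_in}$. Linear maps (identified with their matrices): $\mathbf H_i\mathbf z_i=((\mathbf x_i-\mathbf p^+_{i,j})_{j},\mathbf x_i-\mathbf y_i)$, $\mathbf A_i\mathbf z_i=((\mathbf x_i-\mathbf p^-_{i,j})_j,(\mathbf y_i-\mathbf q^-_{i,j})_j,(\mathbf y_i-\mathbf q^+_{i,j})_j)$, $\mathbf D_i=\mathrm{Diag}((d_{i,j})_{j\in\mathcal N_i},r_i)\otimes\mathbf I_n$. $G_i(\mathbf z_i,\mathbf w_i)=\frac12\|\mathbf H_i\mathbf z_i\|^2-\mathbf w_i^T\mathbf D_i\mathbf H_i\mathbf z_i$. $\mathcal X=\{\mathbf z:\mathbf x_i=\mathbf a_i\ \forall i\in\mathcal A\}$, $\mathcal Y=\{\mathbf z:\mathbf p^+_{i,j}=\mathbf p^-_{j,i},\ \mathbf q^+_{i,j}=\mathbf q^-_{j,i}\ \forall i,\ j\in\mathcal N_i\}$. $|\mathbf M|$ is the entrywise absolute value, $\|\mathbf v\|^2_{\mathbf M}=\mathbf v^T\mathbf M\mathbf v$, $\mathbf S_i=|\mathbf A_i^T\mathbf A_i|+\frac1c|\mathbf H_i^T\mathbf H_i|$, $\mathbf U_i=\mathbf H_i^T\mathbf H_i+c\mathbf A_i^T\mathbf A_i+c\mathbf S_i$ (a positive definite diagonal matrix). Augmented Lagrangian: $\mathcal L_i(\mathbf z_i,\mathbf w_i,\boldsymbol\lambda_i)=G_i(\mathbf z_i,\mathbf w_i)+\delta_{\mathcal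 B^{N_i+1}}(\mathbf w_i)+\langle\boldsymbol\lambda_i,\mathbf A_i\mathbf z_i\rangle+\frac c2\|\mathbf A_i\mathbf z_i\|^2$. Algorithm SP-ADMM-JCNL (parameters $c,\rho>0$; arbitrary $\mathbf z^0,\mathbf w^0$, $\boldsymbol\lambda^0=\mathbf 0$): for $t\ge0$, $\mathbf z^{t+1}=\arg\min_{\mathbf z\in\mathcal X\cap\mathcal Y}\sum_i[\mathcal L_i(\mathbf z_i,\mathbf w_i^t,\boldsymbol\lambda_i^t)+\frac c2\|\mathbf z_i-\mathbf z_i^t\|^2_{\mathbf S_i}]$; $\mathbf w_i^{t+1}=\mathrm{proj}_{\mathcal B^{N_i+1}}(\mathbf w_i^t+\rho^{-1}\mathbf D_i\mathbf H_i\mathbf z_i^{t+1})$; $\boldsymbol\lambda_i^{t+1}=\boldsymbol\lambda_i^t+c\mathbf A_i\mathbf z_i^{t+1}$. Auxiliary sequence: $\tilde{\mathbf z}_i^{t+1}=\mathbf U_i^{-1}(\mathbf H_i^T\mathbf D_i\mathbf w_i^t-\mathbf A_i^T\boldsymbol\lambda_i^t+c\mathbf S_i\mathbf z_i^t)$ for $t\ge0$, $\tilde{\mathbf z}^t=(\tilde{\mathbf z}_i^t)_i$. Constants: $N_{\max}=\max_iN_i$, $N_{\mathrm{sum}}=\sum_iN_i$, $d_{\max}=\max(\{d_{i,j}\}\cup\{r_i\})$, $\tilde\tau_{\min}=\min_{i\in\mathcal N}\{5(c+1)^2N_i^2+(3c^2+4c+3)N_i\}$. Parameter condition (C): there exist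 $\kappa_1,\kappa_2>0$ with $\kappa_1\ge6(2N_{\max}+2)(1+\frac1c)$, $\kappa_2\ge\frac{3N_{\mathrm{sum}}n(c+1)^2(2N_{\max}+1)\kappa_1}{\tilde\tau_{\min}}$, and $\rho\ge4d_{\max}^2(\kappa_1+\kappa_2)$. *)

From HB Require Import structures.
From mathcomp Require Import all_boot all_order all_algebra.
From mathcomp Require Import reals.
Set Implicit Arguments. Unset Strict Implicit. Unset Printing Implicit Defensive.
Import Order.TTheory GRing.Theory Num.Theory.
Local Open Scope ring_scope.

Definition NB (N : nat) (E : rel 'I_N) (i : 'I_N) : finType := {j : 'I_N | E i j}.

(* Coordinates of the local variable z_i in R^{(4N_i+2)n}:
   inl (inl k)               : (x_i)_k
   inl (inr k)               : (y_i)_k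
   inr (false,false,j,k)     : (p^-_{i,j})_k
   inr (false,true ,j,k)     : (p^+_{i,j})_k
   inr (true ,false,j,k)     : (q^-_{i,j})_k
   inr (true ,true ,j,k)     : (q^+_{i,j})_k                           *)
Definition zix (n N : nat) (E : rel 'I_N) (i : 'I_N) : finType :=
  (('I_n + 'I_n) + (bool * bool * NB E i * 'I_n))%type.

(* Coordinates of w_i (and of H_i z_i) in R^{(N_i+1)n}:
   (Some j, k) : (v_{i,j})_k   ,   (None, k) : (u_i)_k                 *)
Definition wix (n N : nat) (E : rel 'I_N) (i : 'I_N) : finType :=
  (option (NB E i) * 'I_n)%type.

(* Coordinates of A_i z_i and lambda_i in R^{3N_i n}:
   (m, j, k), m = 0 : x_i - p^-_{ij},  m = 1 : y_i - q^-_{ij},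
   m = 2 : y_i - q^+_{ij}                                              *)
Definition aix (n N : nat) (E : rel 'I_N) (i : 'I_N) : finType :=
  ('I_3 * NB E i * 'I_n)%type.

Section Idx.
Variables (n N : nat) (E : rel 'I_N) (i : 'I_N).
Definition ix_x (k : 'I_n) : zix n E i := inl (inl k).
Definition ix_y (k : 'I_n) : zix n E i := inl (inr k).
Definition ix_pm (j : NB E i) (k : 'I_n) : zix n E i := inr (false, false, j, k).
Definition ix_pp (j : NB E i) (k : 'I_n) : zix n E i := inr (false, true, j, k).
Definition ix_qm (j : NB E i) (k : 'I_n) : zix n E i := inr (true, false, j, k).
Definition ix_qp (j : NB E i) (k : 'I_n) : zix n E i := inr (true, true, j, k).
End Idx.

Section LinAlg.
Variable R : realType.
Definition mapp (T1 T2 : finType) (M : T1 -> T2 -> R) (v : T2 -> R) : T1 -> R :=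
  fun a => \sum_b M a b * v b.
Definition mappT (T1 T2 : finType) (M : T1 -> T2 -> R) (v : T1 -> R) : T2 -> R :=
  fun b => \sum_a M a b * v a.
Definition mtm (T1 T2 : finType) (M : T1 -> T2 -> R) : T2 -> T2 -> R :=
  fun a b => \sum_r M r a * M r b.
Definition mabs (T1 T2 : finType) (M : T1 -> T2 -> R) : T1 -> T2 -> R :=
  fun a b => `|M a b|.
Definition dotv (T : finType) (u v : T -> R) : R := \sum_a u a * v a.
Definition sqn (T : finType) (v : T -> R) : R := dotv v v.
Definition wsqn (T : finType) (M : T -> T -> R) (v : T -> R) : R :=
  \sum_a \sum_b v a * M a b * v b.
Definition vsub (T : finType) (u v : T -> R) : T -> R := fun a => u a - v a.
End LinAlg.

Section Problem.
Variables (R : realType) (n N : nat) (E : rel 'I_N) (i : 'I_N).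
Local Notation Z := (zix n E i).
Local Notation W := (wix n E i).
Local Notation Aix := (aix n E i).

(* H_i z_i = ((x_i - p^+_{ij})_j, x_i - y_i) *)
Definition Hmat (r : W) (a : Z) : R :=
  match r with
  | (Some j, k) => (a == ix_x E i k)%:R - (a == ix_pp j k)%:R
  | (None, k) => (a == ix_x E i k)%:R - (a == ix_y E i k)%:R
  end.

(* A_i z_i = ((x_i - p^-_{ij})_j, (y_i - q^-_{ij})_j, (y_i - q^+_{ij})_j) *)
Definition Amat (r : Aix) (a : Z) : R :=
  match r with
  | (m, j, k) =>
      if val m == 0%N then (a == ix_x E i k)%:R - (a == ix_pm j k)%:R
      else if val m == 1%N then (a == ix_y E i k)%:R - (a == ix_qm j k)%:R
      else (a == ix_y E i k)%:R - (a == ix_qp j k)%:R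
  end.

(* diagonal of D_i = Diag((d_{ij})_j, r_i) (x) I_n *)
Definition Ddiag (d : 'I_N -> 'I_N -> R) (rr : 'I_N -> R) (r : W) : R :=
  match r with
  | (Some j, _) => d i (val j)
  | (None, _) => rr i
  end.

Definition Dapp d rr (v : W -> R) : W -> R := fun r => Ddiag d rr r * v r.

Definition Gi d rr (z : Z -> R) (w : W -> R) : R :=
  2^-1 * sqn (mapp Hmat z) - dotv w (Dapp d rr (mapp Hmat z)).

Definition Smat (c : R) : Z -> Z -> R :=
  fun a b => mabs (mtm Amat) a b + c^-1 * mabs (mtm Hmat) a b.

Definition Umat (c : R) : Z -> Z -> R :=
  fun a b => mtm Hmat a b + c * mtm Amat a b + c * Smat c a b.

(* The z-dependent part of  L_i(z_i, w_i, lambda_i) + c/2 ||z_i - zold_i||^2_{S_i}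
   (the indicator delta_{B^{N_i+1}}(w_i) does not depend on z_i). *)
Definition zobj_i (c : R) d rr (z : Z -> R) (w : W -> R) (lam : Aix -> R)
    (zold : Z -> R) : R :=
  Gi d rr z w + dotv lam (mapp Amat z) + c / 2 * sqn (mapp Amat z)
  + c / 2 * wsqn (Smat c) (vsub z zold).

Definition inBalls (w : W -> R) : Prop :=
  forall blk : option (NB E i), \sum_(k < n) (w (blk, k)) ^+ 2 <= 1.

End Problem.
Arguments Hmat {R n N} E i r a.
Arguments Amat {R n N} E i r a.
Arguments Smat {R n N} E i c a b.
Arguments Umat {R n N} E i c a b.

Definition zvar (R : realType) (n N : nat) (E : rel 'I_N) :=
  forall i : 'I_N, zix n E i -> R.
Definition wvar (R : realType) (n N : nat) (E : rel 'I_N) :=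
  forall i : 'I_N, wix n E i -> R.
Definition lvar (R : realType) (n N : nat) (E : rel 'I_N) :=
  forall i : 'I_N, aix n E i -> R.

Definition gsqn (R : realType) (N : nat) (T : 'I_N -> finType)
    (v : forall i, T i -> R) : R := \sum_i sqn (v i).

Definition inX (R : realType) (n N : nat) (E : rel 'I_N) (Anc : {set 'I_N})
    (a : 'I_N -> 'I_n -> R) (z : zvar R n E) : Prop :=
  forall i, i \in Anc -> forall k, z i (ix_x E i k) = a i k.

Definition inY (R : realType) (n N : nat) (E : rel 'I_N) (z : zvar R n E) : Prop :=
  forall (i : 'I_N) (j : NB E i) (i' : NB E (val j)), val i' = i ->
    forall k, z i (ix_pp j k) = z (val j) (ix_pm i' k)
           /\ z i (ix_qp j k) = z (val j) (ix_qm i' k).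

Definition zobj (R : realType) (n N : nat) (E : rel 'I_N) (c : R)
    (d : 'I_N -> 'I_N -> R) (rr : 'I_N -> R)
    (z : zvar R n E) (w : wvar R n E) (lam : lvar R n E) (zold : zvar R n E) : R :=
  \sum_i zobj_i c d rr (z i) (w i) (lam i) (zold i).

Definition sp_admm_jcnl (R : realType) (n N : nat) (E : rel 'I_N)
    (Anc : {set 'I_N}) (a : 'I_N -> 'I_n -> R)
    (d : 'I_N -> 'I_N -> R) (rr : 'I_N -> R) (c rho : R)
    (z : nat -> zvar R n E) (w : nat -> wvar R n E) (lam : nat -> lvar R n E)
    : Prop :=
  (forall i r, lam 0%N i r = 0) /\
  forall t : nat,
    (inX Anc a (z t.+1) /\ inY (z t.+1) /\
     forall z' : zvar R n E, inX Anc a z' -> inY z' ->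
       zobj c d rr (z t.+1) (w t) (lam t) (z t) <= zobj c d rr z' (w t) (lam t) (z t))
    /\
    (* w_i^{t+1} = proj_{B^{N_i+1}}(w_i^t + rho^-1 D_i H_i z_i^{t+1}) *)
    (forall i,
       let v := fun r => w t i r + rho^-1 * Dapp d rr (mapp (Hmat E i) (z t.+1 i)) r in
       inBalls (w t.+1 i) /\
       forall u, inBalls u -> sqn (vsub (w t.+1 i) v) <= sqn (vsub u v))
    /\
    (forall i r, lam t.+1 i r = lam t i r + c * mapp (Amat E i) (z t.+1 i) r).

(* auxiliary sequence: U_i ztil_i^{t+1} = H_i^T D_i w_i^t - A_i^T lambda_i^t + c S_i z_i^t
   (U_i is invertible, so this determines ztil_i^{t+1}). *)
Definition is_aux_seq (R : realType) (n N : nat) (E : rel 'I_N)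
    (d : 'I_N -> 'I_N -> R) (rr : 'I_N -> R) (c : R)
    (z : nat -> zvar R n E) (w : nat -> wvar R n E) (lam : nat -> lvar R n E)
    (ztil : nat -> zvar R n E) : Prop :=
  forall (t : nat) (i : 'I_N) (a : zix n E i),
    mapp (Umat E i c) (ztil t.+1 i) a =
      mappT (Hmat E i) (Dapp d rr (w t i)) a - mappT (Amat E i) (lam t i) a
      + c * mapp (Smat E i c) (z t i) a.

Definition Ndeg (N : nat) (E : rel 'I_N) (i : 'I_N) : nat := #|NB E i|.
Definition Nmax (N : nat) (E : rel 'I_N) : nat := \max_i Ndeg E i.
Definition Nsum (N : nat) (E : rel 'I_N) : nat := \sum_i Ndeg E i.
(* d_max = max({d_ij : j in N_i} u {r_i}); all these are >= 0 *)
Definition dmax (R : realType) (N : nat) (E : rel 'I_N)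
    (d : 'I_N -> 'I_N -> R) (rr : 'I_N -> R) : R :=
  \big[Num.max/0]_i Num.max (rr i) (\big[Num.max/0]_(j : NB E i) d i (val j)).
Definition tau_i (R : realType) (c : R) (Ni : nat) : R :=
  5 * (c + 1) ^+ 2 * (Ni%:R) ^+ 2 + (3 * c ^+ 2 + 4 * c + 3) * Ni%:R.
(* minimum over i of tau_i; the neutral element of the fold is the maximum of
   the tau_i, so this is exactly min_i tau_i whenever N >= 1 *)
Definition tau_maxv (R : realType) (N : nat) (E : rel 'I_N) (c : R) : R :=
  \big[Num.max/0]_i tau_i c (Ndeg E i).
Definition tau_min (R : realType) (N : nat) (E : rel 'I_N) (c : R) : R :=
  \big[Num.min/tau_maxv E c]_i tau_i c (Ndeg E i).

Definition condC (R : realType) (n N : nat) (E : rel 'I_N)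
    (d : 'I_N -> 'I_N -> R) (rr : 'I_N -> R) (c rho : R) : Prop :=
  exists k1 k2 : R, 0 < k1 /\ 0 < k2 /\
    6 * (2 * (Nmax E)%:R + 2) * (1 + c^-1) <= k1 /\
    3 * (Nsum E)%:R * n%:R * (c + 1) ^+ 2 * (2 * (Nmax E)%:R + 1) * k1
      / tau_min E c <= k2 /\
    4 * dmax E d rr ^+ 2 * (k1 + k2) <= rho.

(* Let V be the linear subspace parallel to X /\ Y and zbar a point of X /\ Y
   with A zbar = 0.  Write zeta^t = z^t - zbar; then lambda^t = A nu^t with
   nu^t = c (zeta^1 + ... + zeta^t) in V.  Since z^{t+1} minimises a quadratic
   over the affine space X /\ Y, the slope of the objective vanishes in every
   direction of V.  On V the Euclidean norm is controlled both by
   |H v|^2 + |A v|^2 and by the S-seminorm, because the corresponding kernels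
   are trivial there (an anchor pins x, connectivity propagates it to every
   node, and the rows of A and H then force every other coordinate to 0).
   Testing the optimality condition against zeta^{t+1} and against a preimage
   in V of lambda^{t+1} yields, for the energy
   e_t = c |zeta^t|_S^2 + |lambda^t|^2 / c, a recursion
   (1 + eps) e_{t+1} <= e_t + B, because w^t stays in the unit balls.  Hence
   e_t is bounded, which bounds z^t and lambda^t; ztil^t is bounded since U_i
   is injective. *)
From HB Require Import structures.
From mathcomp Require Import all_boot all_order all_algebra.
From mathcomp Require Import reals.
From mathcomp Require Import ring lra.
From Stdlib Require Import FunctionalExtensionality.
Import Order.TTheory GRing.Theory Num.Theory.
Local Open Scope ring_scope.
Set Implicit Arguments. Unset Strict Implicit. Unset Printing Implicit Defensive.

Section Quadratic.
Variable R : realType.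

Lemma quad_ge0_discr (p b q : R) :
  0 <= p -> (forall s : R, 0 <= s ^+ 2 * p + 2 * s * b + q) -> b ^+ 2 <= p * q.
Proof.
move=> p0 H; have [pz|pp] := eqVneq p 0.
  rewrite pz mul0r; have [bz|bn] := eqVneq b 0; first by rewrite bz expr2 mulr0.
  have := H (- (q + 1) / (2 * b)); rewrite pz mulr0 add0r.
  have -> : 2 * (- (q + 1) / (2 * b)) * b = - (q + 1) by field.
  lra.
have pg : 0 < p by rewrite lt_def pp p0.
have := H (- b / p).
have -> : (- b / p) ^+ 2 * p + 2 * (- b / p) * b + q = q - b ^+ 2 / p by field.
by rewrite subr_ge0 ler_pdivrMr // mulrC.
Qed.

Lemma quad_ge0_cross (p b q k : R) : 0 < k ->
  (forall s : R, 0 <= s ^+ 2 * p + 2 * s * b + q) -> 2 * `|b| <= k * p + k^-1 * q.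
Proof.
move=> k0 H; have h1 := H k; have h2 := H (- k).
have e : k * p + k^-1 * q = k^-1 * (k ^+ 2 * p + q) by field; rewrite gt_eqF.
rewrite e ler_pdivlMl //.
case: (ler0P b) => hb; nra.
Qed.

Lemma quad_ge0_slope_eq0 (l q : R) : (forall s, 0 <= s * l + s ^+ 2 * q) -> l = 0.
Proof.
move=> H; pose t := `|q| + 1.
have t0 : 0 < t by rewrite /t ltr_pwDr // normr_ge0.
have h := H (- l / t).
have e : - l / t * l + (- l / t) ^+ 2 * q = l ^+ 2 * (q - t) / t ^+ 2.
  by field; rewrite gt_eqF.
rewrite e in h.
have h2 : 0 <= l ^+ 2 * (q - t) / t ^+ 2 * t ^+ 2 := mulr_ge0 h (exprn_ge0 _ (ltW t0)).
rewrite divfK ?expf_neq0 ?gt_eqF // in h2.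
have hq : q - t <= -1 by rewrite /t; have := ler_norm q; lra.
have l2 : l ^+ 2 <= 0 by nra.
by apply/eqP; rewrite -sqrf_eq0 eq_le l2 sqr_ge0.
Qed.

Lemma bounded_of_damped_recursion (e : nat -> R) (eps B : R) : 0 < eps ->
  (forall t, (0 < t)%N -> (1 + eps) * e t.+1 <= e t + B) ->
  exists M, forall t, (0 < t)%N -> e t <= M.
Proof.
move=> eps0 step; exists (Num.max (e 1%N) (B / eps)).
set M := Num.max _ _.
have hM1 : e 1%N <= M by rewrite /M le_max lexx.
have hM2 : B <= eps * M by rewrite mulrC -ler_pdivrMr // /M le_max lexx orbT.
suff H : forall t, e t.+1 <= M by case.
elim=> [//|t IH].
have := step t.+1 isT => h.
have : (1 + eps) * e t.+2 <= (1 + eps) * M by lra.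
by rewrite ler_pM2l //; lra.
Qed.

End Quadratic.

Section FiniteVectors.
Variable R : realType.

Lemma sum_indicatorMl (T : finType) (a : T) (f : T -> R) :
  \sum_b (b == a)%:R * f b = f a.
Proof.
rewrite (bigD1 a) //= eqxx mul1r big1 ?addr0 // => b /negbTE ->; by rewrite mul0r.
Qed.

Lemma sum_indicatorMr (T : finType) (a : T) (f : T -> R) :
  \sum_b f b * (b == a)%:R = f a.
Proof. by rewrite -(sum_indicatorMl a f); apply: eq_bigr => b _; rewrite mulrC. Qed.

Variable T : finType.
Implicit Types u v : T -> R.

Lemma dotvC u v : dotv u v = dotv v u.
Proof. by apply: eq_bigr => ? _; rewrite mulrC. Qed.

Lemma dotvDl s u u' v : dotv (fun a => s * u a + u' a) v = s * dotv u v + dotv u' v.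
Proof. rewrite /dotv mulr_sumr -big_split; apply: eq_bigr => ? _ /=; ring. Qed.

Lemma dotvDr s u v v' : dotv u (fun a => s * v a + v' a) = s * dotv u v + dotv u v'.
Proof. by rewrite dotvC dotvDl !(dotvC u). Qed.

Lemma dotvBl u u' v : dotv (fun a => u a - u' a) v = dotv u v - dotv u' v.
Proof. rewrite /dotv -sumrB; apply: eq_bigr => ? _; ring. Qed.

Lemma dotv0l u : dotv (fun _ => 0) u = 0.
Proof. by rewrite /dotv big1 // => ? _; rewrite mul0r. Qed.

Lemma sqn_ge0 u : 0 <= sqn u.
Proof. by apply: sumr_ge0 => ? _; rewrite -expr2 sqr_ge0. Qed.

Lemma sqn_eq0 u : sqn u = 0 -> forall a, u a = 0.
Proof.
move=> h a; have H0 b : xpredT b -> 0 <= u b * u b by rewrite -expr2 sqr_ge0.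
have h2 := psumr_eq0P H0 h.
by move: (h2 a isT) => /eqP; rewrite mulf_eq0 orbb => /eqP.
Qed.

Lemma sqn_comb s u v : sqn (fun a => s * u a + v a) = s ^+ 2 * sqn u + 2 * s * dotv v u + sqn v.
Proof. rewrite /sqn dotvDl !dotvDr (dotvC u v); ring. Qed.

Lemma cauchy_schwarz u v : dotv u v ^+ 2 <= sqn u * sqn v.
Proof.
apply: quad_ge0_discr => [|s]; first exact: sqn_ge0.
by rewrite (dotvC u) -sqn_comb sqn_ge0.
Qed.

Lemma sqnD_le u v : sqn (fun a => u a + v a) <= 2 * (sqn u + sqn v).
Proof.
rewrite /sqn /dotv -big_split mulr_sumr; apply: ler_sum => a _ /=.
have := sqr_ge0 (u a - v a); nra.
Qed.

End FiniteVectors.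

Section Matrices.
Variable R : realType.

Definition bform (T : finType) (M : T -> T -> R) (x y : T -> R) : R :=
  \sum_a \sum_b x a * M a b * y b.

Lemma bform_mtm (T1 T : finType) (M : T1 -> T -> R) x y :
  bform (mtm M) x y = dotv (mapp M x) (mapp M y).
Proof.
rewrite /bform /dotv /mapp /mtm.
transitivity (\sum_a \sum_b \sum_r x a * M r a * (M r b * y b)).
  apply: eq_bigr => a _; apply: eq_bigr => b _; rewrite mulr_sumr mulr_suml.
  by apply: eq_bigr => r _; ring.
under eq_bigr => a _ do rewrite exchange_big /=.
rewrite exchange_big /=; apply: eq_bigr => r _.
rewrite mulr_suml; apply: eq_bigr => a _.
rewrite mulr_sumr; apply: eq_bigr => b _; ring.
Qed.

Lemma bform_mapp (T : finType) (M : T -> T -> R) x y : bform M x y = dotv x (mapp M y).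
Proof.
rewrite /bform /dotv /mapp; apply: eq_bigr => a _; rewrite mulr_sumr.
by apply: eq_bigr => b _; ring.
Qed.

Lemma bformDl (T : finType) (M1 M2 : T -> T -> R) s x y :
  bform (fun a b => M1 a b + s * M2 a b) x y = bform M1 x y + s * bform M2 x y.
Proof.
rewrite /bform mulr_sumr -big_split; apply: eq_bigr => a _.
rewrite mulr_sumr -big_split; apply: eq_bigr => b _ /=; ring.
Qed.

Lemma mapp_comb (T1 T : finType) (M : T1 -> T -> R) s x y :
  mapp M (fun a => s * x a + y a) = fun r => s * mapp M x r + mapp M y r.
Proof.
apply: functional_extensionality => r; rewrite /mapp mulr_sumr -big_split.
by apply: eq_bigr => a _ /=; ring.
Qed.

Lemma mappT_comb (T1 T : finType) (M : T1 -> T -> R) s x y :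
  mappT M (fun a => s * x a + y a) = fun r => s * mappT M x r + mappT M y r.
Proof.
apply: functional_extensionality => r; rewrite /mappT mulr_sumr -big_split.
by apply: eq_bigr => a _ /=; ring.
Qed.

End Matrices.

Section Families.
Variable R : realType.

Definition fam (I : finType) (T : I -> finType) := forall i : I, T i -> R.
Definition fsqn (I : finType) (T : I -> finType) (v : fam T) : R := \sum_i sqn (v i).
Definition linF (I1 I2 : finType) (T1 : I1 -> finType) (T2 : I2 -> finType)
    (f : fam T1 -> fam T2) :=
  forall s x y, f (fun i a => s * x i a + y i a) = fun j b => s * f x j b + f y j b.

Lemma fam_ext (I : finType) (T : I -> finType) (u v : fam T) :
  (forall i a, u i a = v i a) -> u = v.
Proof.
move=> h; apply: functional_extensionality_dep => i.
by apply: functional_extensionality => a; apply: h.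
Qed.

Lemma fsqn_ge0 (I : finType) (T : I -> finType) (v : fam T) : 0 <= fsqn v.
Proof. by apply: sumr_ge0 => i _; apply: sqn_ge0. Qed.

Lemma fsqn_sig (I : finType) (T : I -> finType) (v : fam T) :
  fsqn v = \sum_(x : {i : I & T i}) v (tag x) (tagged x) ^+ 2.
Proof.
rewrite /fsqn /sqn /dotv.
under eq_bigr => i _ do under eq_bigr => a _ do rewrite -expr2.
exact: (sig_big_dep xpredT (fun _ => xpredT) (fun i a => v i a ^+ 2)).
Qed.

Lemma linF_comp (I1 I2 I3 : finType) (T1 : I1 -> finType) (T2 : I2 -> finType)
    (T3 : I3 -> finType) (f : fam T2 -> fam T3) (g : fam T1 -> fam T2) :
  linF f -> linF g -> linF (fun x => f (g x)).
Proof. by move=> lf lg s x y; rewrite lg lf. Qed.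

Lemma linF_zero (I1 I2 : finType) (T1 : I1 -> finType) (T2 : I2 -> finType) :
  linF (fun _ : fam T1 => (fun _ _ => 0) : fam T2).
Proof. by move=> s x y; apply: fam_ext => i a; rewrite mulr0 addr0. Qed.

Lemma linF_id (I1 : finType) (T1 : I1 -> finType) : linF (fun x : fam T1 => x).
Proof. by []. Qed.

Section Representation.
Variables (I1 I2 : finType) (T1 : I1 -> finType) (T2 : I2 -> finType).
Local Notation X := {i : I1 & T1 i}.
Local Notation Y := {j : I2 & T2 j}.

Definition fdelta (x : X) : fam T1 := fun i a => (Tagged T1 a == x)%:R.
Arguments fdelta x i a : clear implicits.

Definition fmat (f : fam T1 -> fam T2) (y : Y) (x : X) : R :=
  f (fdelta x) (tag y) (tagged y).

Lemma fam_decomp (v : fam T1) i a :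
  v i a = \sum_(x : X) v (tag x) (tagged x) * fdelta x i a.
Proof.
rewrite /fdelta; under eq_bigr => x _ do rewrite eq_sym.
by rewrite (sum_indicatorMr (Tagged T1 a) (fun x => v (tag x) (tagged x))).
Qed.

Lemma linF0 (f : fam T1 -> fam T2) : linF f -> f (fun _ _ => 0) = fun _ _ => 0.
Proof.
move=> lf; have := lf (-1) (fun _ _ => 0) (fun _ _ => 0).
have -> : (fun (i : I1) (_ : T1 i) => -1 * 0 + 0) = (fun _ _ => 0 : R).
  by apply: fam_ext => ? ?; rewrite mulr0 addr0.
move=> ->; apply: fam_ext => ? ?; ring.
Qed.

Lemma linF_sum (f : fam T1 -> fam T2) (lf : linF f) (s : seq X) (c : X -> R)
    (g : X -> fam T1) :
  f (fun i a => \sum_(x <- s) c x * g x i a) = fun j b => \sum_(x <- s) c x * f (g x) j b.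
Proof.
elim: s => [|x s IH].
  rewrite (_ : (fun i a => _) = (fun _ _ => 0)); last by apply: fam_ext => ? ?; rewrite big_nil.
  by rewrite linF0 //; apply: fam_ext => ? ?; rewrite big_nil.
rewrite (_ : (fun i a => _) = (fun i a => c x * g x i a + \sum_(y <- s) c y * g y i a)).
  by rewrite lf IH; apply: fam_ext => ? ?; rewrite big_cons.
by apply: fam_ext => ? ?; rewrite big_cons.
Qed.

Lemma linF_fmat (f : fam T1 -> fam T2) (lf : linF f) (v : fam T1) j b :
  f v j b = \sum_(x : X) v (tag x) (tagged x) * f (fdelta x) j b.
Proof.
have Ev : v = fun i a => \sum_(x <- index_enum X) v (tag x) (tagged x) * fdelta x i a.
  by apply: fam_ext => i a; rewrite {1}(fam_decomp v a).
by rewrite {1}Ev linF_sum.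
Qed.

Lemma linF_bounded (f : fam T1 -> fam T2) : linF f ->
  exists K, 0 <= K /\ forall v, fsqn (f v) <= K * fsqn v.
Proof.
move=> lf; exists (\sum_(y : Y) \sum_(x : X) fmat f y x ^+ 2); split.
  by apply: sumr_ge0 => ? _; apply: sumr_ge0 => ? _; apply: sqr_ge0.
move=> v; rewrite (fsqn_sig (f v)) (fsqn_sig v) mulr_suml; apply: ler_sum => y _.
rewrite linF_fmat //.
apply: (le_trans (cauchy_schwarz (fun x => v (tag x) (tagged x)) (fmat f y))).
rewrite mulrC /sqn /dotv.
under eq_bigr => a _ do rewrite -expr2.
by under [X in _ * X]eq_bigr => a _ do rewrite -expr2.
Qed.

End Representation.

Section PseudoInverse.
Variables (I1 I2 : finType) (T1 : I1 -> finType) (T2 : I2 -> finType).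
Local Notation X := {i : I1 & T1 i}.
Local Notation Y := {j : I2 & T2 j}.
Variables (f : fam T1 -> fam T2) (lf : linF f).

Definition fmx : 'M[R]_(#|{: Y}|, #|{: X}|) := \matrix_(i, j) fmat f (enum_val i) (enum_val j).

(* By [mulmxKpV], fmx *m pinvmx fmx *m fmx = fmx: a generalized inverse of f. *)
Definition fpinv (u : fam T2) : fam T1 := fun i a =>
  \sum_(y : Y) pinvmx fmx (enum_rank (Tagged T1 a)) (enum_rank y) * u (tag y) (tagged y).

Lemma fmat_pinvK (y0 : Y) (x2 : X) :
  \sum_(x1 : X) \sum_(y : Y)
      fmat f y0 x1 * pinvmx fmx (enum_rank x1) (enum_rank y) * fmat f y x2
  = fmat f y0 x2.
Proof.
have := congr1 (fun M : 'M_(_, _) => M (enum_rank y0) (enum_rank x2))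
  (mulmxKpV (submx_refl fmx)).
rewrite /= mxE [in RHS]mxE !enum_rankK => <-.
rewrite (reindex enum_rank) /=; last exact: onW_bij (enum_rank_bij Y).
rewrite exchange_big /=; apply: eq_bigr => y _.
rewrite mxE (reindex enum_rank) /=; last exact: onW_bij (enum_rank_bij X).
rewrite mulr_suml; apply: eq_bigr => x1 _.
by rewrite !mxE !enum_rankK.
Qed.

Lemma fpinv_lin : linF fpinv.
Proof.
move=> s x y; apply: fam_ext => i a; rewrite /fpinv mulr_sumr -big_split.
by apply: eq_bigr => yy _ /=; ring.
Qed.

Lemma fpinvK (x : fam T1) : f (fpinv (f x)) = f x.
Proof.
apply: fam_ext => j b.
rewrite (linF_fmat lf (fpinv (f x))) (linF_fmat lf x).
pose yb := Tagged T2 b.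
transitivity (\sum_(x1 : X) \sum_(y : Y) \sum_(x2 : X)
   x (tag x2) (tagged x2)
   * (fmat f yb x1 * pinvmx fmx (enum_rank x1) (enum_rank y) * fmat f y x2)).
  apply: eq_bigr => x1 _; rewrite /fpinv taggedK mulr_suml; apply: eq_bigr => y _.
  rewrite (linF_fmat lf x) mulr_sumr mulr_suml; apply: eq_bigr => x2 _.
  rewrite /fmat /=; ring.
under eq_bigr => x1 _ do rewrite exchange_big /=.
rewrite exchange_big /=; apply: eq_bigr => x2 _.
under eq_bigr => x1 _ do rewrite -mulr_sumr.
by rewrite -mulr_sumr fmat_pinvK.
Qed.

Lemma linF_pseudo_inverse : exists (g : fam T2 -> fam T1) (K : R), 0 <= K /\
  (forall u, fsqn (g u) <= K * fsqn u) /\ (forall x, f (g (f x)) = f x).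
Proof.
have [K [K0 HK]] := linF_bounded fpinv_lin.
by exists fpinv, K; split=> //; split=> // x; apply: fpinvK.
Qed.

End PseudoInverse.

Section KernelBound.
Variables (I1 I2 I3 I4 : finType) (T1 : I1 -> finType) (T2 : I2 -> finType)
  (T3 : I3 -> finType) (T4 : I4 -> finType).

Definition Tsum (s : (I2 + I3)%type) : finType :=
  match s with inl i => T2 i | inr j => T3 j end.

Definition fpair (f1 : fam T1 -> fam T2) (f2 : fam T1 -> fam T3) (x : fam T1) : fam Tsum :=
  fun s => match s as s0 return Tsum s0 -> R with inl i => f1 x i | inr j => f2 x j end.

(* Writing x = g (f x) + (x - g (f x)) with g a bounded generalized inverse of
   f = (f1, f2), the second summand lies in the kernel of f, hence of h. *)
Lemma linF_bound_of_ker (f1 : fam T1 -> fam T2) (f2 : fam T1 -> fam T3)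
    (h : fam T1 -> fam T4) :
  linF f1 -> linF f2 -> linF h ->
  (forall x, f1 x = (fun _ _ => 0) -> f2 x = (fun _ _ => 0) -> h x = (fun _ _ => 0)) ->
  exists K, 0 <= K /\ forall x, fsqn (h x) <= K * (fsqn (f1 x) + fsqn (f2 x)).
Proof.
move=> l1 l2 lh hk.
have lF : linF (fpair f1 f2).
  by move=> s x y; apply: fam_ext => -[i|i] a /=; rewrite ?l1 ?l2.
have [g [Kg [Kg0 [HKg Hg]]]] := linF_pseudo_inverse lF.
have [Kh [Kh0 HKh]] := linF_bounded lh.
exists (Kh * Kg); split; first exact: mulr_ge0.
move=> x; set x' := g (fpair f1 f2 x).
pose dd := fun i a => -1 * x' i a + x i a.
have Fd : fpair f1 f2 dd = fun _ _ => 0.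
  by rewrite /dd lF Hg; apply: fam_ext => s a; ring.
have hd : h dd = fun _ _ => 0.
  apply: hk; apply: fam_ext => i a.
    by have := congr1 (fun F : fam Tsum => F (inl i) a) Fd.
  by have := congr1 (fun F : fam Tsum => F (inr i) a) Fd.
have hx : h x = h x'.
  apply: fam_ext => i a; have := congr1 (fun F : fam T4 => F i a) hd; rewrite /dd lh /=.
  by move=> e; apply/eqP; rewrite -subr_eq0; apply/eqP; rewrite -e; ring.
have eF : fsqn (fpair f1 f2 x) = fsqn (f1 x) + fsqn (f2 x) by rewrite /fsqn big_sumType.
rewrite hx -eF -mulrA; apply: (le_trans (HKh x')).
by apply: ler_wpM2l => //; apply: HKg.
Qed.

End KernelBound.

Section FamilyForms.
Variables (N : nat) (T : 'I_N -> finType).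
Implicit Types u v : fam T.

Definition fdot u v : R := \sum_i dotv (u i) (v i).

Lemma fdotC u v : fdot u v = fdot v u.
Proof. by apply: eq_bigr => i _; rewrite dotvC. Qed.

Lemma fdotDl s u u' v : fdot (fun i a => s * u i a + u' i a) v = s * fdot u v + fdot u' v.
Proof. by rewrite /fdot mulr_sumr -big_split; apply: eq_bigr => i _; rewrite dotvDl. Qed.

Lemma fdotDr s u v v' : fdot u (fun i a => s * v i a + v' i a) = s * fdot u v + fdot u v'.
Proof. by rewrite fdotC fdotDl !(fdotC u). Qed.

Lemma fsqn_fdot u : fsqn u = fdot u u.
Proof. by []. Qed.

Lemma fdot_young u v k : 0 < k -> 2 * `|fdot u v| <= k * fsqn u + k^-1 * fsqn v.
Proof.
move=> k0; apply: quad_ge0_cross => // s.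
have := fsqn_ge0 (fun i a => s * u i a + v i a).
rewrite fsqn_fdot fdotDl !fdotDr (fdotC v u) !fsqn_fdot.
by have -> : s * (s * fdot u u + fdot u v) + (s * fdot u v + fdot v v)
  = s ^+ 2 * fdot u u + 2 * s * fdot u v + fdot v v by ring.
Qed.

Lemma fsqnD_le u v : fsqn (fun i a => u i a + v i a) <= 2 * (fsqn u + fsqn v).
Proof. by rewrite /fsqn -big_split mulr_sumr /=; apply: ler_sum => i _; apply: sqnD_le. Qed.

Lemma fsqnN u : fsqn (fun i a => - u i a) = fsqn u.
Proof. by apply: eq_bigr => i _; apply: eq_bigr => b _; rewrite mulrNN. Qed.

Lemma fsqnB_le u v : fsqn (fun i a => u i a - v i a) <= 2 * (fsqn u + fsqn v).
Proof. by have := fsqnD_le u (fun i a => - v i a); rewrite fsqnN. Qed.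

End FamilyForms.
End Families.

Section DifferenceRows.
Variable R : realType.

Lemma sum_indicatorB (T : finType) (p q : T) (z : T -> R) :
  \sum_a ((a == p)%:R - (a == q)%:R) * z a = z p - z q.
Proof.
rewrite -(sum_indicatorMl p z) -(sum_indicatorMl q z) -sumrB.
by apply: eq_bigr => a _; ring.
Qed.

Lemma sum_indicatorD (T : finType) (p q : T) (z : T -> R) :
  \sum_a ((a == p)%:R + (a == q)%:R) * z a = z p + z q.
Proof.
rewrite -(sum_indicatorMl p z) -(sum_indicatorMl q z) -big_split.
by apply: eq_bigr => a _ /=; ring.
Qed.

Variables (T1 T : finType) (M : T1 -> T -> R) (p q : T1 -> T).
Hypothesis pq : forall r, p r != q r.
Hypothesis HM : forall r a, M r a = (a == p r)%:R - (a == q r)%:R.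

Lemma mapp_diff_rows z r : mapp M z r = z (p r) - z (q r).
Proof. by rewrite /mapp -sum_indicatorB; apply: eq_bigr => a _; rewrite HM. Qed.

Lemma mabs_diff_rows r a : mabs M r a = (a == p r)%:R + (a == q r)%:R.
Proof.
rewrite /mabs HM; have := pq r.
case: (eqVneq a (p r)) => ea; case: (eqVneq a (q r)) => eb /=.
- by rewrite -ea -eb eqxx.
- by move=> _; rewrite mulr1n mulr0n subr0 normr1 addr0.
- by move=> _; rewrite mulr1n mulr0n sub0r normrN normr1 add0r.
- by move=> _; rewrite mulr0n subr0 normr0 addr0.
Qed.

Lemma mapp_abs_diff_rows z r : mapp (mabs M) z r = z (p r) + z (q r).
Proof. by rewrite /mapp -sum_indicatorD; apply: eq_bigr => a _; rewrite mabs_diff_rows. Qed.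

(* Off the diagonal, M^T M has only nonpositive contributions, so taking absolute
   values commutes with forming the Gram matrix. *)
Lemma mabs_mtm_diff_rows a b : mabs (mtm M) a b = mtm (mabs M) a b.
Proof.
rewrite /mabs /mtm.
have [->|ab] := eqVneq a b.
  rewrite ger0_norm; last by apply: sumr_ge0 => r _; rewrite -expr2 sqr_ge0.
  by apply: eq_bigr => r _; rewrite -normrM ger0_norm // -expr2 sqr_ge0.
have neg r : M r a * M r b <= 0.
  rewrite !HM; have := pq r => pqr.
  case: (eqVneq a (p r)) => ea; case: (eqVneq a (q r)) => eb;
  case: (eqVneq b (p r)) => ec; case: (eqVneq b (q r)) => ed /=;
  rewrite ?mulr1n ?mulr0n;
  try (by move: pqr; rewrite -?ea -?eb -?ec -?ed eqxx);
  try (by move: ab; rewrite ?ea ?eb ?ec ?ed eqxx);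
  lra.
rewrite ler0_norm; last by apply: sumr_le0 => r _; apply: neg.
rewrite -sumrN; apply: eq_bigr => r _.
by rewrite -normrM ler0_norm // neg.
Qed.

End DifferenceRows.

Definition row_qm : 'I_3 := @Ordinal 3 1 isT.
Definition row_qp : 'I_3 := @Ordinal 3 2 isT.

Section LocalMatrices.
Variables (R : realType) (n N : nat) (E : rel 'I_N) (i : 'I_N).
Local Notation Z := (zix n E i).
Local Notation W := (wix n E i).
Local Notation Aix := (aix n E i).

(* Every row of A_i and of H_i is e_pos - e_neg for two distinct coordinates. *)
Definition Apos (r : Aix) : Z := let: (m, j, k) := r in
  if val m == 0%N then ix_x E i k else ix_y E i k.
Definition Aneg (r : Aix) : Z := let: (m, j, k) := r in
  if val m == 0%N then ix_pm j k else if val m == 1%N then ix_qm j k else ix_qp j k.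
Definition Hpos (r : W) : Z := let: (o, k) := r in ix_x E i k.
Definition Hneg (r : W) : Z := let: (o, k) := r in
  match o with Some j => ix_pp j k | None => ix_y E i k end.

Lemma Apos_neq r : Apos r != Aneg r.
Proof. by case: r => [[m j] k] /=; case: ifP => //; case: ifP. Qed.
Lemma Hpos_neq r : Hpos r != Hneg r.
Proof. by case: r => [[j|] k]. Qed.

Lemma AmatE r a : Amat E i r a = ((a == Apos r)%:R - (a == Aneg r)%:R : R).
Proof. by case: r => [[m j] k] /=; case: ifP => //; case: ifP. Qed.
Lemma HmatE r a : Hmat E i r a = ((a == Hpos r)%:R - (a == Hneg r)%:R : R).
Proof. by case: r => [[j|] k]. Qed.

Lemma mapp_Amat (z : Z -> R) r : mapp (Amat E i) z r = z (Apos r) - z (Aneg r).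
Proof. exact: (mapp_diff_rows AmatE). Qed.
Lemma mapp_Hmat (z : Z -> R) r : mapp (Hmat E i) z r = z (Hpos r) - z (Hneg r).
Proof. exact: (mapp_diff_rows HmatE). Qed.
Lemma mapp_absAmat (z : Z -> R) r : mapp (mabs (Amat E i)) z r = z (Apos r) + z (Aneg r).
Proof. exact: (mapp_abs_diff_rows Apos_neq AmatE). Qed.
Lemma mapp_absHmat (z : Z -> R) r : mapp (mabs (Hmat E i)) z r = z (Hpos r) + z (Hneg r).
Proof. exact: (mapp_abs_diff_rows Hpos_neq HmatE). Qed.

Definition Sform (c : R) (x y : Z -> R) : R :=
  dotv (mapp (mabs (Amat E i)) x) (mapp (mabs (Amat E i)) y)
  + c^-1 * dotv (mapp (mabs (Hmat E i)) x) (mapp (mabs (Hmat E i)) y).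

Lemma bform_Smat c x y : bform (Smat E i c) x y = Sform c x y.
Proof.
rewrite /Sform -!bform_mtm -bformDl /bform; apply: eq_bigr => a _; apply: eq_bigr => b _.
by rewrite /Smat (mabs_mtm_diff_rows Apos_neq AmatE) (mabs_mtm_diff_rows Hpos_neq HmatE).
Qed.

Lemma SformC c x y : Sform c x y = Sform c y x.
Proof. by rewrite /Sform dotvC [dotv (mapp (mabs (Hmat E i)) x) _]dotvC. Qed.

Lemma Sform_ge0 c x : 0 < c -> 0 <= Sform c x x.
Proof.
move=> c0; apply: addr_ge0; first exact: sqn_ge0.
by apply: mulr_ge0; [rewrite invr_ge0 ltW | exact: sqn_ge0].
Qed.

Lemma SformDl c s x x' y : Sform c (fun a => s * x a + x' a) y = s * Sform c x y + Sform c x' y.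
Proof. rewrite /Sform !mapp_comb !dotvDl; ring. Qed.

Lemma SformDr c s x y y' : Sform c x (fun a => s * y a + y' a) = s * Sform c x y + Sform c x y'.
Proof. by rewrite SformC SformDl !(SformC c x). Qed.

(* x^T U_i x is a sum of nonnegative squares of the entries of H x, A x, |A| x
   and |H| x; their vanishing forces every coordinate to vanish (a neighbour j0
   is needed to reach x_i and y_i). *)
Lemma Umat_ker (c : R) (c0 : 0 < c) (j0 : NB E i) (x : Z -> R) :
  (forall a, mapp (Umat E i c) x a = 0) -> forall a, x a = 0.
Proof.
move=> hU.
have e0 : bform (Umat E i c) x x = 0.
  by rewrite bform_mapp /dotv big1 // => a _; rewrite hU mulr0.
have e : bform (Umat E i c) x x
    = sqn (mapp (Hmat E i) x) + c * sqn (mapp (Amat E i) x) + c * Sform c x x.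
  rewrite /sqn -bform_Smat -!bform_mtm /bform !mulr_sumr -!big_split; apply: eq_bigr => a _.
  by rewrite !mulr_sumr -!big_split; apply: eq_bigr => b _ /=; rewrite /Umat; ring.
rewrite e0 /Sform mulrDr mulrA mulfV ?gt_eqF // mul1r in e.
have h1 := sqn_ge0 (mapp (Hmat E i) x).
have h2 := mulr_ge0 (ltW c0) (sqn_ge0 (mapp (Amat E i) x)).
have h3 := mulr_ge0 (ltW c0) (sqn_ge0 (mapp (mabs (Amat E i)) x)).
have h4 := sqn_ge0 (mapp (mabs (Hmat E i)) x).
have sH : sqn (mapp (Hmat E i) x) = 0 by rewrite /sqn in e h1 h2 h3 h4 *; lra.
have sHa : sqn (mapp (mabs (Hmat E i)) x) = 0 by rewrite /sqn in e h1 h2 h3 h4 *; lra.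
have sA : sqn (mapp (Amat E i) x) = 0.
  have : c * sqn (mapp (Amat E i) x) = 0 by rewrite /sqn in e h1 h2 h3 h4 *; lra.
  by move/eqP; rewrite mulf_eq0 gt_eqF //= => /eqP.
have sAa : sqn (mapp (mabs (Amat E i)) x) = 0.
  have : c * sqn (mapp (mabs (Amat E i)) x) = 0 by rewrite /sqn in e h1 h2 h3 h4 *; lra.
  by move/eqP; rewrite mulf_eq0 gt_eqF //= => /eqP.
have rA r : x (Apos r) = 0 /\ x (Aneg r) = 0.
  have := sqn_eq0 sA r; have := sqn_eq0 sAa r.
  rewrite mapp_Amat mapp_absAmat => u v; split; lra.
have rH r : x (Hpos r) = 0 /\ x (Hneg r) = 0.
  have := sqn_eq0 sH r; have := sqn_eq0 sHa r.
  rewrite mapp_Hmat mapp_absHmat => u v; split; lra.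
move=> [[k|k]|[[[b1 b2] j] k]].
- exact: (rA (ord0, j0, k)).1.
- exact: (rA (row_qm, j0, k)).1.
- case: b1; case: b2.
  + exact: (rA (row_qp, j, k)).2.
  + exact: (rA (row_qm, j, k)).2.
  + exact: (rH (Some j, k)).2.
  + exact: (rA (ord0, j, k)).2.
Qed.

End LocalMatrices.

Section GlobalOperators.
Variables (R : realType) (n N : nat) (E : rel 'I_N).
Local Notation zv := (@fam R 'I_N (zix n E)).
Local Notation lv := (@fam R 'I_N (aix n E)).
Local Notation wv := (@fam R 'I_N (wix n E)).

Definition Aop (x : zv) : lv := fun i => mapp (Amat E i) (x i).
Definition Hop (x : zv) : wv := fun i => mapp (Hmat E i) (x i).
Definition absAop (x : zv) : lv := fun i => mapp (mabs (Amat E i)) (x i).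
Definition absHop (x : zv) : wv := fun i => mapp (mabs (Hmat E i)) (x i).
Definition Uop (c : R) (x : zv) : zv := fun i => mapp (Umat E i c) (x i).

Lemma Aop_lin : linF Aop.
Proof. by move=> s x y; apply: fam_ext => i a; rewrite /Aop mapp_comb. Qed.
Lemma Hop_lin : linF Hop.
Proof. by move=> s x y; apply: fam_ext => i a; rewrite /Hop mapp_comb. Qed.
Lemma absAop_lin : linF absAop.
Proof. by move=> s x y; apply: fam_ext => i a; rewrite /absAop mapp_comb. Qed.
Lemma absHop_lin : linF absHop.
Proof. by move=> s x y; apply: fam_ext => i a; rewrite /absHop mapp_comb. Qed.
Lemma Uop_lin c : linF (Uop c).
Proof. by move=> s x y; apply: fam_ext => i a; rewrite /Uop mapp_comb. Qed.

Definition Sfam (c : R) (x y : zv) : R := \sum_i Sform c (x i) (y i).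

Lemma SfamC c x y : Sfam c x y = Sfam c y x.
Proof. by apply: eq_bigr => i _; rewrite SformC. Qed.
Lemma SfamDl c s x x' y : Sfam c (fun i a => s * x i a + x' i a) y = s * Sfam c x y + Sfam c x' y.
Proof. by rewrite /Sfam mulr_sumr -big_split; apply: eq_bigr => i _; rewrite SformDl. Qed.
Lemma SfamDr c s x y y' : Sfam c x (fun i a => s * y i a + y' i a) = s * Sfam c x y + Sfam c x y'.
Proof. by rewrite SfamC SfamDl !(SfamC c x). Qed.
Lemma Sfam_ge0 c x : 0 < c -> 0 <= Sfam c x x.
Proof. by move=> c0; apply: sumr_ge0 => i _; apply: Sform_ge0. Qed.
Lemma SfamE c x : Sfam c x x = fsqn (absAop x) + c^-1 * fsqn (absHop x).
Proof. by rewrite /Sfam /fsqn mulr_sumr -big_split. Qed.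

Lemma Sfam_young c x y k : 0 < c -> 0 < k ->
  2 * `|Sfam c x y| <= k * Sfam c x x + k^-1 * Sfam c y y.
Proof.
move=> c0 k0; apply: quad_ge0_cross => // s.
have := Sfam_ge0 (fun i a => s * x i a + y i a) c0.
rewrite SfamDl !SfamDr (SfamC c y x).
by have -> : s * (s * Sfam c x x + Sfam c x y) + (s * Sfam c x y + Sfam c y y)
  = s ^+ 2 * Sfam c x x + 2 * s * Sfam c x y + Sfam c y y by ring.
Qed.

Variable Anc : {set 'I_N}.

Definition inV (x : zv) := inX Anc (fun _ _ => 0) x /\ inY x.

Lemma inV_comb (s : R) (x y : zv) : inV x -> inV y -> inV (fun i b => s * x i b + y i b).
Proof.
move=> [xX xY] [yX yY]; split.
  by move=> i iA k; rewrite xX // yX // mulr0 addr0.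
move=> i j i' e k; have [h1 h2] := xY i j i' e k; have [h3 h4] := yY i j i' e k.
by rewrite h1 h2 h3 h4.
Qed.

Hypothesis hs : forall i j, E i j = E j i.

Lemma nb_revP i (j : NB E i) : E (val j) i.
Proof. by rewrite hs (valP j). Qed.
Definition nb_rev i (j : NB E i) : NB E (val j) := exist (fun k => E (val j) k) i (nb_revP j).

(* With sg = 1 this describes the kernel of (H, A) on V, with sg = -1 that of
   (|H|, |A|): the x-blocks agree along edges, hence everywhere by connectivity,
   and vanish at an anchor. *)
Lemma inV_rows_eq0 (conn : forall i j, connect E i j) (anc : Anc != set0) (x : zv) (sg : R) :
  sg != 0 -> inV x ->
  (forall i r, x i (Apos r) = sg * x i (Aneg r)) ->
  (forall i r, x i (Hpos r) = sg * x i (Hneg r)) ->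
  forall i b, x i b = 0.
Proof.
move=> sg0 [hX hY] hrA hrH.
have edge i (j : NB E i) k : x i (ix_x E i k) = x (val j) (ix_x E (val j) k).
  have h1 := hrH i (Some j, k); have h2 := hrA (val j) (ord0, nb_rev j, k).
  have [h3 _] := hY i j (nb_rev j) erefl k.
  by rewrite /= in h1 h2; rewrite h1 h2 h3.
have xconst k i j : connect E i j -> x i (ix_x E i k) = x j (ix_x E j k).
  move=> /connectP [p pth ->]; elim: p i pth => //= y p IH i /andP [eiy pth].
  by rewrite (edge i (exist _ y eiy) k) /=; apply: IH.
have /set0Pn [k0 k0A] := anc.
have x0 i k : x i (ix_x E i k) = 0 by rewrite (xconst k i k0 (conn _ _)) hX.
have sg_eq0 (u v : R) : u = 0 -> u = sg * v -> v = 0.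
  by move=> -> /esym /eqP; rewrite mulf_eq0 (negbTE sg0) /= => /eqP.
have y0 i k : x i (ix_y E i k) = 0 by apply: (sg_eq0 _ _ (x0 i k) (hrH i (None, k))).
move=> i [[k|k]|[[[b1 b2] j] k]]; first exact: x0; first exact: y0.
case: b1; case: b2.
- exact: (sg_eq0 _ _ (y0 i k) (hrA i (row_qp, j, k))).
- exact: (sg_eq0 _ _ (y0 i k) (hrA i (row_qm, j, k))).
- exact: (sg_eq0 _ _ (x0 i k) (hrH i (Some j, k))).
- exact: (sg_eq0 _ _ (x0 i k) (hrA i (ord0, j, k))).
Qed.

(* Zero the anchored x-blocks and copy the neighbour's p^-, q^- into p^+, q^+. *)
Definition projV (x : zv) : zv := fun i a =>
  match a with
  | inl (inl k) => if i \in Anc then 0 else x i a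
  | inl (inr k) => x i a
  | inr (b1, b2, j, k) => if b2 then x (val j) (inr (b1, false, nb_rev j, k)) else x i a
  end.

Lemma projV_lin : linF projV.
Proof.
move=> s x y; apply: fam_ext => i [[k|k]|[[[b1 b2] j] k]] /=; rewrite ?mulr0 ?addr0 //.
  by case: ifP => _; rewrite ?mulr0 ?addr0.
by case: b2.
Qed.

Lemma projV_inV x : inV (projV x).
Proof.
split; first by move=> i iA k; rewrite /projV /= iA.
move=> i j i' e k; rewrite /projV /=.
by have -> : nb_rev j = i' by apply: val_inj; rewrite /= e.
Qed.

Lemma projV_id x : inV x -> projV x = x.
Proof.
move=> [hX hY]; apply: fam_ext => i [[k|k]|[[[b1 b2] j] k]] /=.
- by case: ifP => // iA; rewrite (hX i iA k).
- by [].
- case: b2 => //; have [h1 h2] := hY i j (nb_rev j) erefl k.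
  by case: b1; [rewrite h2 | rewrite h1].
Qed.

Lemma inV_sqn_le_HA (conn : forall i j, connect E i j) (anc : Anc != set0) :
  exists K, 0 <= K /\ forall x, inV x -> fsqn x <= K * (fsqn (Hop x) + fsqn (Aop x)).
Proof.
suff [K [K0 HK]] : exists K, 0 <= K /\ forall x,
    fsqn (projV x) <= K * (fsqn (Hop (projV x)) + fsqn (Aop (projV x))).
  by exists K; split=> // x Vx; have := HK x; rewrite projV_id.
have lP := projV_lin.
apply: (linF_bound_of_ker (linF_comp Hop_lin lP) (linF_comp Aop_lin lP) lP).
move=> x h1 h2; apply: fam_ext => i b.
  apply: (inV_rows_eq0 conn anc (oner_neq0 R) (projV_inV x)) => j r.
- have := congr1 (fun F : lv => F j r) h2; rewrite /Aop mapp_Amat /= => e.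
  by rewrite mul1r; apply/eqP; rewrite -subr_eq0 e.
- have := congr1 (fun F : wv => F j r) h1; rewrite /Hop mapp_Hmat /= => e.
  by rewrite mul1r; apply/eqP; rewrite -subr_eq0 e.
Qed.

Lemma inV_sqn_le_absAH (conn : forall i j, connect E i j) (anc : Anc != set0) :
  exists K, 0 <= K /\ forall x, inV x -> fsqn x <= K * (fsqn (absAop x) + fsqn (absHop x)).
Proof.
suff [K [K0 HK]] : exists K, 0 <= K /\ forall x,
    fsqn (projV x) <= K * (fsqn (absAop (projV x)) + fsqn (absHop (projV x))).
  by exists K; split=> // x Vx; have := HK x; rewrite projV_id.
have lP := projV_lin.
apply: (linF_bound_of_ker (linF_comp absAop_lin lP) (linF_comp absHop_lin lP) lP).
move=> x h1 h2; apply: fam_ext => i b.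
  have sg0 : (-1 : R) != 0 by rewrite oppr_eq0 oner_neq0.
apply: (inV_rows_eq0 conn anc sg0 (projV_inV x)) => j r.
- have := congr1 (fun F : lv => F j r) h1; rewrite /absAop mapp_absAmat /= => e.
  by rewrite mulN1r; apply/eqP; rewrite -subr_eq0 opprK e.
- have := congr1 (fun F : wv => F j r) h2; rewrite /absHop mapp_absHmat /= => e.
  by rewrite mulN1r; apply/eqP; rewrite -subr_eq0 opprK e.
Qed.

Lemma sqn_le_Uop c : 0 < c -> (forall i, (0 < Ndeg E i)%N) ->
  exists K, 0 <= K /\ forall x : zv, fsqn x <= K * fsqn (Uop c x).
Proof.
move=> c0 hdeg.
suff [K [K0 HK]] : exists K, 0 <= K /\ forall x : zv,
    fsqn x <= K * (fsqn (Uop c x) + fsqn ((fun _ _ => 0) : lv)).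
  have fsqn0 : fsqn ((fun _ _ => 0) : lv) = 0.
    by rewrite /fsqn big1 // => i _; rewrite /sqn dotv0l.
  by exists K; split=> // x; have := HK x; rewrite fsqn0 addr0.
apply: (linF_bound_of_ker (Uop_lin c) (@linF_zero R _ _ (zix n E) (aix n E))
  (@linF_id R _ (zix n E))).
move=> x h1 _; apply: fam_ext => i b.
have /card_gt0P [j0 _] := hdeg i.
apply: (Umat_ker c0 j0) => r.
by have := congr1 (fun F : zv => F i r) h1.
Qed.

Variable a0 : 'I_N -> 'I_n -> R.

Definition anchor_or0 i k : R := if i \in Anc then a0 i k else 0.

(* A point of X /\ Y with A zbar = 0: every p-copy equals the owner's x, q = y = 0. *)
Definition zbar : zv := fun i b =>
  match b with
  | inl (inl k) => anchor_or0 i k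
  | inl (inr k) => 0
  | inr (b1, b2, j, k) =>
      if b1 then 0 else if b2 then anchor_or0 (val j) k else anchor_or0 i k
  end.

Lemma zbar_X : inX Anc a0 zbar.
Proof. by move=> i iA k; rewrite /zbar /= /anchor_or0 iA. Qed.
Lemma zbar_Y : inY zbar.
Proof. by move=> i j i' e k; rewrite /zbar /=. Qed.
Lemma Amat_zbar i : mapp (Amat E i) (@zbar i) = fun _ => 0.
Proof.
apply: functional_extensionality => -[[m j] k]; rewrite mapp_Amat /=.
by case: ifP => _; rewrite /zbar /= ?subrr //; case: ifP => _; rewrite subrr.
Qed.

Lemma XY_addV (z v : zv) (s : R) : inX Anc a0 z -> inY z -> inV v ->
  inX Anc a0 (fun i b => s * v i b + z i b) /\ inY (fun i b => s * v i b + z i b).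
Proof.
move=> hX hY [vX vY]; split.
  by move=> i iA k; rewrite hX // vX // mulr0 add0r.
move=> i j i' e k; have [h1 h2] := hY i j i' e k; have [h3 h4] := vY i j i' e k.
by rewrite h1 h2 h3 h4.
Qed.

Lemma XY_subV (z z' : zv) : inX Anc a0 z -> inY z -> inX Anc a0 z' -> inY z' ->
  inV (fun i b => z i b - z' i b).
Proof.
move=> hX hY hX' hY'; split.
  by move=> i iA k; rewrite hX // hX' // subrr.
move=> i j i' e k; have [h1 h2] := hY i j i' e k; have [h3 h4] := hY' i j i' e k.
by rewrite h1 h2 h3 h4.
Qed.

End GlobalOperators.
Arguments Aop [R n N E] x i _.
Arguments Hop [R n N E] x i _.
Arguments absAop [R n N E] x i _.
Arguments absHop [R n N E] x i _.
Arguments Uop [R n N E] c x i _.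
Arguments projV [R n N E] Anc hs x i _.
Arguments zbar [R n N E] Anc a0 i _.

Section Objective.
Variables (R : realType) (n N : nat) (E : rel 'I_N).
Variables (c : R) (d : 'I_N -> 'I_N -> R) (rr : 'I_N -> R).

Lemma Dapp_comb i s (x y : wix n E i -> R) :
  Dapp d rr (fun r => s * x r + y r) = fun r => s * Dapp d rr x r + Dapp d rr y r.
Proof. by apply: functional_extensionality => r; rewrite /Dapp; ring. Qed.

Lemma dotv_Dapp i (w v : wix n E i -> R) : dotv w (Dapp d rr v) = dotv (Dapp d rr w) v.
Proof. by apply: eq_bigr => r _; rewrite /Dapp; ring. Qed.

(* zobj_i along the line z + s v is  zobj_i z + s slope_i + s^2 curv_i. *)
Definition slope_i i (z v zo : zix n E i -> R) (w : wix n E i -> R) (lam : aix n E i -> R) : R :=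
  dotv (mapp (Hmat E i) z) (mapp (Hmat E i) v) - dotv w (Dapp d rr (mapp (Hmat E i) v))
  + dotv lam (mapp (Amat E i) v) + c * dotv (mapp (Amat E i) z) (mapp (Amat E i) v)
  + c * Sform c (vsub z zo) v.
Definition curv_i i (v : zix n E i -> R) : R :=
  2^-1 * sqn (mapp (Hmat E i) v) + c / 2 * sqn (mapp (Amat E i) v) + c / 2 * Sform c v v.

Lemma zobj_i_comb i (z v zo : zix n E i -> R) w lam s :
  zobj_i c d rr (fun a => s * v a + z a) w lam zo =
  zobj_i c d rr z w lam zo + s * slope_i z v zo w lam + s ^+ 2 * curv_i v.
Proof.
rewrite /zobj_i /Gi /slope_i /curv_i !mapp_comb Dapp_comb !sqn_comb !dotvDr.
have -> : vsub (fun a => s * v a + z a) zo = fun a => s * v a + vsub z zo a.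
  by apply: functional_extensionality => a; rewrite /vsub; ring.
rewrite /wsqn.
have bformE (M : _ -> _ -> R) (x : zix n E i -> R) :
  \sum_a \sum_b x a * M a b * x b = bform M x x by [].
rewrite !bformE !bform_Smat SformDl !SformDr (SformC c (vsub z zo) v).
by field.
Qed.

Local Notation zv := (@fam R 'I_N (zix n E)).

Definition slope (z v zo : zv) (w : wvar R n E) (lam : lvar R n E) : R :=
  \sum_i slope_i (z i) (v i) (zo i) (w i) (lam i).
Definition curv (v : zv) : R := \sum_i curv_i (v i).

Lemma zobj_comb (z v zo : zv) w lam s :
  zobj c d rr (fun i a => s * v i a + z i a) w lam zo =
  zobj c d rr z w lam zo + s * slope z v zo w lam + s ^+ 2 * curv v.
Proof.
rewrite /zobj /slope /curv !mulr_sumr -!big_split; apply: eq_bigr => i _.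
exact: zobj_i_comb.
Qed.

Lemma slope_eq0_of_argmin (Anc : {set 'I_N}) (a0 : 'I_N -> 'I_n -> R)
    (zopt zo : zv) (w : wvar R n E) (lam : lvar R n E) (v : zv) :
  inX Anc a0 zopt -> inY zopt -> inV Anc v ->
  (forall z' : zv, inX Anc a0 z' -> inY z' ->
     zobj c d rr zopt w lam zo <= zobj c d rr z' w lam zo) ->
  slope zopt v zo w lam = 0.
Proof.
move=> hX hY hV hmin; apply: (@quad_ge0_slope_eq0 _ _ (curv v)) => s.
have [hX' hY'] := XY_addV s hX hY hV.
by have := hmin _ hX' hY'; rewrite zobj_comb; lra.
Qed.

End Objective.

Section EnergyArithmetic.
Variable R : realType.

Lemma energy_upper_scalar (c K1 k B0 h' al' dd a' L' : R) :
  0 < c -> 0 <= K1 -> 0 <= k -> 0 <= h' -> 0 <= al' -> 0 <= dd ->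
  a' <= K1 * (h' + al') -> L' <= 2 * k * (h' + B0) + c * k * dd ->
  c * a' + L' / c <= (c * K1 + 2 * k / c + k + 1) * (h' + al' + dd) + 2 * k * B0 / c.
Proof.
move=> c0 K10 k0 h0 al0 dd0 ha hL.
have cK1 : 0 <= c * K1 := mulr_ge0 (ltW c0) K10.
have kc : 0 <= 2 * k / c := divr_ge0 (mulr_ge0 (ler0n _ 2) k0) (ltW c0).
have t1 : c * a' <= c * K1 * (h' + al') by rewrite -mulrA ler_pM2l.
have t2 : L' / c <= 2 * k / c * h' + 2 * k * B0 / c + k * dd.
  rewrite ler_pdivrMr //.
  have -> : (2 * k / c * h' + 2 * k * B0 / c + k * dd) * c
    = 2 * k * (h' + B0) + c * k * dd by field; rewrite gt_eqF.
  done.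
have q1 : 0 <= c * K1 * dd := mulr_ge0 cK1 dd0.
have q2 : 0 <= 2 * k / c * al' := mulr_ge0 kc al0.
have q3 : 0 <= 2 * k / c * dd := mulr_ge0 kc dd0.
have q4 : 0 <= k * h' := mulr_ge0 k0 h0.
have q5 : 0 <= k * al' := mulr_ge0 k0 al0.
nra.
Qed.

(* The energy e = c a + L / c, with a the S-seminorm of zeta and L the squared
   norm of lambda, before (unprimed) and after (primed) one iteration. *)
Lemma energy_step_scalar (c K1 k B0 h' al' a' a dd X P L' L b : R) :
  0 < c -> 0 <= K1 -> 0 <= k -> 0 <= B0 -> 0 <= h' -> 0 <= al' -> 0 <= dd ->
  h' + b + (c * al' + P) + c * X = 0 ->
  a = dd - 2 * X + a' ->
  L' = c ^+ 2 * al' + 2 * c * P + L ->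
  2 * `|b| <= 2 * B0 + 2^-1 * h' ->
  a' <= K1 * (h' + al') ->
  L' <= 2 * k * (h' + B0) + c * k * dd ->
  (1 + (c / (c + 1)) / (c * K1 + 2 * k / c + k + 1)) * (c * a' + L' / c)
    <= (c * a + L / c) + (2 * B0 + 2 * k * B0 / c).
Proof.
move=> c0 K10 k0 B00 h0 al0 dd0 e1 e2 e3 hb ha hL.
set E' := c * a' + L' / c; set E := c * a + L / c.
have descent : E' + (3 / 2) * h' + c * al' + c * dd <= E + 2 * B0.
  have eP : P = - h' - b - c * al' - c * X by lra.
  have -> : E' = E - c * dd - c * al' - 2 * h' - 2 * b.
    by rewrite /E' /E e2 e3 eP; field; rewrite gt_eqF.
  have := ler_norm (- b); rewrite normrN; lra.
set K2 := c * K1 + 2 * k / c + k + 1.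
have upper : E' <= K2 * (h' + al' + dd) + 2 * k * B0 / c by apply: energy_upper_scalar.
have cK1 : 0 <= c * K1 := mulr_ge0 (ltW c0) K10.
have kc : 0 <= 2 * k / c := divr_ge0 (mulr_ge0 (ler0n _ 2) k0) (ltW c0).
have K20 : 0 < K2 by rewrite /K2; lra.
set mu := c / (c + 1).
have mu0 : 0 < mu by rewrite /mu divr_gt0 // addr_gt0.
have muc : mu <= c by rewrite /mu ler_pdivrMr ?addr_gt0 //; nra.
have mu1 : mu <= 1 by rewrite /mu ler_pdivrMr ?addr_gt0 //; lra.
have step2 : mu * (h' + al' + dd) <= (3 / 2) * h' + c * al' + c * dd by nra.
have step3 : mu / K2 * (E' - 2 * k * B0 / c) <= mu * (h' + al' + dd).
  by rewrite -mulrA ler_pM2l // ler_pdivrMl //; lra.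
have kb : 0 <= 2 * k * B0 / c := divr_ge0 (mulr_ge0 (mulr_ge0 (ler0n _ 2) k0) B00) (ltW c0).
have step4 : mu / K2 * (2 * k * B0 / c) <= 2 * k * B0 / c.
  by apply: ler_piMl => //; rewrite ler_pdivrMr // mul1r /K2; lra.
have -> : (1 + mu / K2) * E'
  = E' + mu / K2 * (E' - 2 * k * B0 / c) + mu / K2 * (2 * k * B0 / c) by ring.
lra.
Qed.

Lemma dual_step_scalar (L G1 S1 c k k1 k2 U dd x1 x2 : R) :
  0 < c -> 0 <= k1 -> 0 <= k2 -> k = k1 + c * k2 + 1 -> 0 <= L ->
  L = - G1 - c * S1 ->
  2 * `|G1| <= k * U + k^-1 * x1 -> 2 * `|S1| <= k * dd + k^-1 * x2 ->
  x1 <= k1 * L -> x2 <= k2 * L ->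
  L <= k * U + c * k * dd.
Proof.
move=> c0 k10 k20 ek L0 eL h1 h2 h3 h4.
have ck2 : 0 <= c * k2 := mulr_ge0 (ltW c0) k20.
have k0 : 0 < k by rewrite ek; lra.
have hx : k^-1 * x1 + c * (k^-1 * x2) <= L.
  have -> : k^-1 * x1 + c * (k^-1 * x2) = (x1 + c * x2) / k by field; rewrite gt_eqF.
  rewrite ler_pdivrMr //.
  have : c * x2 <= c * (k2 * L) by rewrite ler_pM2l.
  have : (k1 + c * k2) * L <= L * k by rewrite ek mulrDr mulr1 mulrC; lra.
  nra.
have hS : c * (2 * `|S1|) <= c * (k * dd + k^-1 * x2) by rewrite ler_pM2l.
have nG : - G1 <= `|G1| by rewrite -normrN ler_norm.
have cS : c * (- S1) <= c * `|S1| by rewrite ler_pM2l // -normrN ler_norm.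
have e2 : c * (k * dd + k^-1 * x2) = c * k * dd + c * (k^-1 * x2) by ring.
lra.
Qed.

End EnergyArithmetic.

Unset Implicit Arguments.
Section Iterates.
Variables (R : realType) (n N : nat) (E : rel 'I_N) (Anc : {set 'I_N})
  (a : 'I_N -> 'I_n -> R) (d : 'I_N -> 'I_N -> R) (rr : 'I_N -> R) (c rho : R)
  (z : nat -> zvar R n E) (w : nat -> wvar R n E) (lam : nat -> lvar R n E)
  (ztil : nat -> zvar R n E).
Hypothesis hs : forall i j, E i j = E j i.
Hypothesis hdeg : forall i, (0 < Ndeg E i)%N.
Hypothesis conn : forall i j, connect E i j.
Hypothesis anc : Anc != set0.
Hypothesis c0 : 0 < c.
Hypothesis alg : sp_admm_jcnl Anc a d rr c rho z w lam.
Hypothesis aux : is_aux_seq d rr c z w lam ztil.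

Local Notation zv := (@fam R 'I_N (zix n E)).
Local Notation zbar := (zbar Anc a : zv).

Definition zeta t : zv := fun i b => z t i b - zbar i b.
Fixpoint nu t : zv := match t with
  | 0 => fun _ _ => 0
  | t'.+1 => fun i b => c * zeta t'.+1 i b + nu t' i b end.
Definition zdiff t : zv := fun i b => zeta t.+1 i b - zeta t i b.
Definition wres t : wvar R n E := fun i r => Hop zbar i r - Dapp d rr (w t i) r.
Definition energy t := c * Sfam c (zeta t) (zeta t) + fsqn (Aop (nu t)) / c.

Lemma alg_X t : inX Anc a (z t.+1).
Proof. by case: (alg) => _ /(_ t) [[]]. Qed.
Lemma alg_Y t : inY (z t.+1).
Proof. by case: (alg) => _ /(_ t) [[_ []]]. Qed.
Lemma alg_min t (z' : zv) : inX Anc a z' -> inY z' ->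
  zobj c d rr (z t.+1) (w t) (lam t) (z t) <= zobj c d rr z' (w t) (lam t) (z t).
Proof. by case: (alg) => _ /(_ t) [[_ [_ h]] _]; apply: h. Qed.
Lemma alg_ball t i : inBalls (w t.+1 i).
Proof. by case: (alg) => _ /(_ t) [_ [/(_ i) [h _] _]]. Qed.
Lemma alg_lam0 i r : lam 0 i r = 0.
Proof. by case: (alg) => h _; apply: h. Qed.
Lemma alg_lamS t i r : lam t.+1 i r = lam t i r + c * mapp (Amat E i) (z t.+1 i) r.
Proof. by case: (alg) => _ /(_ t) [_ [_ h]]; apply: h. Qed.

Lemma zeta_inV t : (0 < t)%N -> inV Anc (zeta t).
Proof.
by case: t => // t _; apply: XY_subV; [exact: alg_X | exact: alg_Y | exact: zbar_X | exact: zbar_Y].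
Qed.

Lemma nu_inV t : inV Anc (nu t).
Proof.
elim: t => [|t IH] /=; first by split; [move=> ? ? ? | move=> ? ? ? ? ?].
by apply: inV_comb => //; apply: zeta_inV.
Qed.

Lemma z_decomp t i : z t i = fun b => 1 * zeta t i b + zbar i b.
Proof. by apply: functional_extensionality => b; rewrite /zeta; ring. Qed.

Lemma lam_Aop_nu t : lam t = Aop (nu t).
Proof.
apply: fam_ext => i r; elim: t => [|t IH].
  by rewrite alg_lam0 /Aop /mapp /= big1 // => ? _; rewrite mulr0.
by rewrite alg_lamS IH /Aop /= mapp_comb (z_decomp t.+1 i) mapp_comb Amat_zbar; ring.
Qed.

Lemma slopeE t (v : zv) :
  slope c d rr (z t.+1) v (z t) (w t) (lam t) =
  fdot (Hop (zeta t.+1)) (Hop v) + fdot (wres t) (Hop v) + fdot (Aop (nu t.+1)) (Aop v)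
  + c * Sfam c (zdiff t) v.
Proof.
rewrite /slope /fdot /Sfam mulr_sumr -!big_split; apply: eq_bigr => i _ /=.
rewrite /slope_i.
have -> : vsub (z t.+1 i) (z t i) = zdiff t i.
  by apply: functional_extensionality => b; rewrite /vsub /zdiff /zeta; ring.
rewrite lam_Aop_nu /Aop /Hop /wres /= (z_decomp t.+1 i) !mapp_comb Amat_zbar.
by rewrite dotv_Dapp !dotvDl dotvBl dotv0l; ring.
Qed.

Lemma iterate_slope_eq0 t (v : zv) : inV Anc v -> slope c d rr (z t.+1) v (z t) (w t) (lam t) = 0.
Proof. by move=> hv; apply: (slope_eq0_of_argmin (alg_X t) (alg_Y t) hv (alg_min t)). Qed.

Definition balls_card : R := \sum_i \sum_(o : option (NB E i)) 1.

Lemma balls_card_ge0 : 0 <= balls_card.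
Proof. by apply: sumr_ge0 => i _; apply: sumr_ge0 => o _; apply: ler01. Qed.

Lemma w_sqn_le t : fsqn (w t.+1) <= balls_card.
Proof.
apply: ler_sum => i _.
have -> : sqn (w t.+1 i) = \sum_(o : option (NB E i)) \sum_(k < n) (w t.+1 i (o, k)) ^+ 2.
  by symmetry; rewrite pair_big /=; apply: eq_bigr => -[o k] _ /=; rewrite expr2.
by apply: ler_sum => o _; apply: alg_ball.
Qed.

Definition Dop (w' : wvar R n E) : wvar R n E := fun i r => Dapp d rr (w' i) r.

Lemma Dop_lin : linF Dop.
Proof. by move=> s x y; apply: fam_ext => i r; rewrite /Dop Dapp_comb. Qed.

Lemma wres_bounded : exists B0, 0 <= B0 /\ forall t, (0 < t)%N -> fsqn (wres t) <= B0.
Proof.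
have [Dm [Dm0 HDm]] := linF_bounded Dop_lin.
exists (2 * (fsqn (Hop zbar) + Dm * balls_card)); split.
  by rewrite mulr_ge0 // addr_ge0 ?fsqn_ge0 // mulr_ge0 // balls_card_ge0.
case=> // t _; apply: (le_trans (fsqnB_le _ _)); rewrite ler_pM2l // lerD2l.
by apply: (le_trans (HDm (w t.+1))); apply: ler_wpM2l => //; apply: w_sqn_le.
Qed.

Lemma Sfam_bounded : exists CS, 0 <= CS /\ forall x : zv, Sfam c x x <= CS * fsqn x.
Proof.
have [CAa [CAa0 HCAa]] := linF_bounded (@absAop_lin R n N E).
have [CHa [CHa0 HCHa]] := linF_bounded (@absHop_lin R n N E).
have ci0 : 0 <= c^-1 by rewrite invr_ge0 ltW.
exists (CAa + c^-1 * CHa); split; first by rewrite addr_ge0 // mulr_ge0.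
move=> x; rewrite SfamE mulrDl -mulrA.
by apply: lerD; [apply: HCAa | apply: ler_wpM2l => //; apply: HCHa].
Qed.

(* Testing optimality against a preimage v in V of lambda^{t+1} = A nu^{t+1}
   with |v|^2 = O(|lambda^{t+1}|^2). *)
Lemma dual_bound (B0 : R) : 0 <= B0 -> (forall t, (0 < t)%N -> fsqn (wres t) <= B0) ->
  exists k, 0 < k /\ forall t, (0 < t)%N ->
    fsqn (Aop (nu t.+1)) <= 2 * k * (fsqn (Hop (zeta t.+1)) + B0) + c * k * Sfam c (zdiff t) (zdiff t).
Proof.
move=> B00 HQ0.
have lP : linF (projV Anc hs : zv -> zv) := @projV_lin R n N E Anc hs.
have [CH [CH0 HCH]] := linF_bounded (@Hop_lin R n N E).
have [CP [CP0 HCP]] := linF_bounded lP.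
have [g [Kg [Kg0 [HKg Hg]]]] := linF_pseudo_inverse (linF_comp (@Aop_lin R n N E) lP).
have [CS [CS0 HCS]] := Sfam_bounded.
pose k1 := CH * CP * Kg; pose k2 := CS * CP * Kg.
have k10 : 0 <= k1 by rewrite !mulr_ge0.
have k20 : 0 <= k2 by rewrite !mulr_ge0.
pose k := k1 + c * k2 + 1.
have k0 : 0 < k by rewrite /k; have := mulr_ge0 (ltW c0) k20; lra.
exists k; split=> // t t0.
pose zt' := zeta t.+1; pose nv := nu t.+1.
pose v := projV Anc hs (g (Aop nv)).
have Av : Aop v = Aop nv by have := Hg nv; rewrite /= (projV_id hs (nu_inV t.+1)).
have ev := iterate_slope_eq0 t v (projV_inV Anc hs (g (Aop nv))).
rewrite slopeE -/v Av -/nv in ev.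
pose Q1 : wvar R n E := fun i r => Hop zt' i r + wres t i r.
have eQ : fdot Q1 (Hop v) = fdot (Hop zt') (Hop v) + fdot (wres t) (Hop v).
  have -> : Q1 = fun i r => 1 * Hop zt' i r + wres t i r by apply: fam_ext => i r; rewrite mul1r.
  by rewrite fdotDl mul1r.
have fv : fsqn v <= CP * (Kg * fsqn (Aop nv)).
  by apply: (le_trans (HCP _)); apply: ler_wpM2l => //; apply: HKg.
have fQ1 : fsqn Q1 <= 2 * (fsqn (Hop zt') + B0).
  by apply: (le_trans (fsqnD_le _ _)); rewrite ler_pM2l // lerD2l; apply: HQ0.
have -> : 2 * k * (fsqn (Hop zt') + B0) = k * (2 * (fsqn (Hop zt') + B0)) by ring.
apply: (@dual_step_scalar R _ (fdot Q1 (Hop v)) (Sfam c (zdiff t) v) c k k1 k2 _ _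
          (fsqn (Hop v)) (Sfam c v v) c0 k10 k20 erefl (fsqn_ge0 _)).
- by rewrite fsqn_fdot; lra.
- by apply: (le_trans (fdot_young _ _ k0)); apply: lerD => //; rewrite ler_pM2l.
- exact: Sfam_young _ _ c0 k0.
- by apply: (le_trans (HCH v)); rewrite /k1 -!mulrA; apply: ler_wpM2l.
- by apply: (le_trans (HCS v)); rewrite /k2 -!mulrA; apply: ler_wpM2l.
Qed.

Lemma energy_recursion : exists eps B, 0 < eps /\
  forall t, (0 < t)%N -> (1 + eps) * energy t.+1 <= energy t + B.
Proof.
have [B0 [B00 HQ0]] := wres_bounded.
have [k [k0 Hdual]] := dual_bound B0 B00 HQ0.
have [KV [KV0 HKV]] := @inV_sqn_le_HA R n N E Anc hs conn anc.
have [CS [CS0 HCS]] := Sfam_bounded.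
pose K1 := CS * KV.
have K10 : 0 <= K1 by rewrite mulr_ge0.
exists ((c / (c + 1)) / (c * K1 + 2 * k / c + k + 1)), (2 * B0 + 2 * k * B0 / c); split.
  apply: divr_gt0; first by apply: divr_gt0 => //; rewrite addr_gt0.
  have := mulr_ge0 (ltW c0) K10.
  have := divr_ge0 (mulr_ge0 (ler0n R 2) (ltW k0)) (ltW c0).
  lra.
move=> t t0.
pose zt' := zeta t.+1; pose zt := zeta t; pose dz := zdiff t.
have V' : inV Anc zt' := zeta_inV t.+1 isT.
have nuS : Aop (nu t.+1) = fun i r => c * Aop zt' i r + Aop (nu t) i r.
  exact: (@Aop_lin R n N E c zt' (nu t)).
have e1 := iterate_slope_eq0 t zt' V'.
rewrite slopeE nuS fdotDl -!fsqn_fdot in e1.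
have e2 : Sfam c zt zt = Sfam c dz dz - 2 * Sfam c dz zt' + Sfam c zt' zt'.
  have -> : zt = fun i b => -1 * dz i b + zt' i b by apply: fam_ext => i b; rewrite /dz /zdiff /zt /zt'; ring.
  by rewrite SfamDl !SfamDr (SfamC c zt' dz); ring.
have e3 : fsqn (Aop (nu t.+1))
    = c ^+ 2 * fsqn (Aop zt') + 2 * c * fdot (Aop (nu t)) (Aop zt') + fsqn (Aop (nu t)).
  by rewrite !fsqn_fdot nuS fdotDl !fdotDr (fdotC (Aop zt') (Aop (nu t))); ring.
have hb : 2 * `|fdot (wres t) (Hop zt')| <= 2 * B0 + 2^-1 * fsqn (Hop zt').
  by apply: (le_trans (fdot_young _ _ (k := 2) _)) => //; apply: lerD => //; rewrite ler_pM2l // HQ0.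
have ha : Sfam c zt' zt' <= K1 * (fsqn (Hop zt') + fsqn (Aop zt')).
  by apply: (le_trans (HCS zt')); rewrite /K1 -mulrA ler_wpM2l // HKV.
exact: (energy_step_scalar c0 K10 (ltW k0) B00 (fsqn_ge0 (Hop zt')) (fsqn_ge0 (Aop zt'))
          (Sfam_ge0 dz c0) e1 e2 e3 hb ha (Hdual t t0)).
Qed.

Lemma energy_bounded : exists Em, forall t, (0 < t)%N -> energy t <= Em.
Proof.
have [eps [B [eps0 step]]] := energy_recursion.
exact: bounded_of_damped_recursion eps0 step.
Qed.

Lemma zeta_bounded : exists M, forall t, (0 < t)%N -> fsqn (zeta t) <= M.
Proof.
have [Em HEm] := energy_bounded.
have [KS [KS0 HKS]] := @inV_sqn_le_absAH R n N E Anc hs conn anc.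
exists (KS * ((1 + c) * (Em / c))) => t t0.
apply: (le_trans (HKS _ (zeta_inV t t0))); apply: ler_wpM2l => //.
have hS : Sfam c (zeta t) (zeta t) <= Em / c.
  rewrite ler_pdivlMr // mulrC; apply: le_trans (HEm t t0); rewrite /energy lerDl.
  by apply: divr_ge0; [apply: fsqn_ge0 | apply: ltW].
rewrite SfamE in hS.
have h1 := fsqn_ge0 (absAop (zeta t)); have h2 := fsqn_ge0 (absHop (zeta t)).
have h3 : fsqn (absHop (zeta t)) = c * (c^-1 * fsqn (absHop (zeta t))).
  by rewrite mulrA mulfV ?gt_eqF // mul1r.
have h4 : 0 <= c^-1 * fsqn (absHop (zeta t)) by rewrite mulr_ge0 // invr_ge0 ltW.
have h5 : c * (c^-1 * fsqn (absHop (zeta t))) <= c * (Em / c) by rewrite ler_pM2l //; lra.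
have h6 : c * fsqn (absAop (zeta t)) <= c * (Em / c) by rewrite ler_pM2l //; lra.
have -> : (1 + c) * (Em / c) = Em / c + c * (Em / c) by ring.
nra.
Qed.

Lemma z_bounded : exists M, forall t, (0 < t)%N -> fsqn (z t) <= M.
Proof.
have [Mzeta Hzeta] := zeta_bounded.
exists (2 * (Mzeta + fsqn zbar)) => t t0.
have -> : z t = fun i b => zeta t i b + zbar i b by apply: fam_ext => i b; rewrite /zeta; ring.
by apply: (le_trans (fsqnD_le _ _)); rewrite ler_pM2l // lerD2r; apply: Hzeta.
Qed.

Lemma lam_bounded : exists M, forall t, (0 < t)%N -> fsqn (lam t) <= M.
Proof.
have [Em HEm] := energy_bounded.
exists (c * Em) => t t0; rewrite lam_Aop_nu.
have h := HEm t t0; rewrite /energy in h.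
have h1 := mulr_ge0 (ltW c0) (Sfam_ge0 (zeta t) c0).
have : fsqn (Aop (nu t)) / c <= Em by lra.
by rewrite ler_pdivrMr // mulrC.
Qed.

Definition HtDop (w' : wvar R n E) : zv := fun i b => mappT (Hmat E i) (Dapp d rr (w' i)) b.
Definition Atop (l : lvar R n E) : zv := fun i b => mappT (Amat E i) (l i) b.
Definition cSop (x : zv) : zv := fun i b => c * mapp (Smat E i c) (x i) b.

Lemma HtDop_lin : linF HtDop.
Proof. by move=> s x y; apply: fam_ext => i b; rewrite /HtDop Dapp_comb mappT_comb. Qed.
Lemma Atop_lin : linF Atop.
Proof. by move=> s x y; apply: fam_ext => i b; rewrite /Atop mappT_comb. Qed.
Lemma cSop_lin : linF cSop.
Proof. by move=> s x y; apply: fam_ext => i b; rewrite /cSop mapp_comb; ring. Qed.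

Lemma ztil_bounded : exists M, forall t, (0 < t)%N -> fsqn (ztil t) <= M.
Proof.
have [Mz Hz] := z_bounded.
have [Ml Hl] := lam_bounded.
have [KU [KU0 HKU]] := @sqn_le_Uop R n N E c c0 hdeg.
have [C1 [C10 HC1]] := linF_bounded HtDop_lin.
have [C2 [C20 HC2]] := linF_bounded Atop_lin.
have [C3 [C30 HC3]] := linF_bounded cSop_lin.
exists (Num.max (fsqn (ztil 1%N)) (KU * (4 * (C1 * balls_card) + 4 * (C2 * Ml) + 2 * (C3 * Mz)))).
case=> [//|[_|t _]]; rewrite le_max ?lexx //; apply/orP; right.
apply: (le_trans (HKU _)); apply: ler_wpM2l => //.
have -> : Uop c (ztil t.+2) = fun i b => (HtDop (w t.+1) i b - Atop (lam t.+1) i b) + cSop (z t.+1) i b.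
  by apply: fam_ext => i b; rewrite /Uop aux.
apply: (le_trans (fsqnD_le _ _)).
have hA := fsqnB_le (HtDop (w t.+1)) (Atop (lam t.+1)).
have hB1 : fsqn (HtDop (w t.+1)) <= C1 * balls_card.
  by apply: (le_trans (HC1 _)); apply: ler_wpM2l => //; apply: w_sqn_le.
have hB2 : fsqn (Atop (lam t.+1)) <= C2 * Ml.
  by apply: (le_trans (HC2 _)); apply: ler_wpM2l => //; apply: Hl.
have hB3 : fsqn (cSop (z t.+1)) <= C3 * Mz.
  by apply: (le_trans (HC3 _)); apply: ler_wpM2l => //; apply: Hz.
lra.
Qed.

Lemma sp_admm_jcnl_bounded : exists M : R, forall t : nat, (1 <= t)%N ->
  [/\ gsqn (z t) <= M, gsqn (w t) <= M, gsqn (lam t) <= M & gsqn (ztil t) <= M].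
Proof.
have [Mz Hz] := z_bounded.
have [Ml Hl] := lam_bounded.
have [Mt Ht] := ztil_bounded.
exists (Num.max (Num.max Mz balls_card) (Num.max Ml Mt)) => -[//|t] _.
rewrite !le_max; split.
- by rewrite (Hz t.+1 isT).
- by rewrite (w_sqn_le t) orbT.
- by rewrite (Hl t.+1 isT) orbT.
- by rewrite (Ht t.+1 isT) !orbT.
Qed.

End Iterates.
Arguments sp_admm_jcnl_bounded {R n N E Anc a d rr c rho z w lam ztil}.

Theorem lemmaA8p2 (R : realType) (n N : nat) (E : rel 'I_N)
    (Anc : {set 'I_N}) (a : 'I_N -> 'I_n -> R)
    (d : 'I_N -> 'I_N -> R) (r : 'I_N -> R) (c rho : R)
    (z : nat -> zvar R n E) (w : nat -> wvar R n E) (lam : nat -> lvar R n E)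
    (ztil : nat -> zvar R n E) :
  (forall i j, E i j = E j i) ->
  (forall i, ~~ E i i) ->
  (forall i, (0 < Ndeg E i)%N) ->
  (forall i j, connect E i j) ->
  Anc != set0 ->
  (forall i j, E i j -> d i j = d j i) ->
  (forall i j, E i j -> 0 <= d i j) ->
  (forall i, 0 <= r i) ->
  0 < c -> 0 < rho -> condC n E d r c rho ->
  sp_admm_jcnl Anc a d r c rho z w lam ->
  is_aux_seq d r c z w lam ztil ->
  exists M : R, forall t : nat, (1 <= t)%N ->
    [/\ gsqn (z t) <= M, gsqn (w t) <= M, gsqn (lam t) <= M & gsqn (ztil t) <= M].
Proof.
move=> hs _ hdeg conn anc _ _ _ c0 _ _ alg aux.
exact: sp_admm_jcnl_bounded hs hdeg conn anc c0 alg aux.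
Qed.
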